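(* Let $\mathcal{M}_i=(E_i,\rho_i)$, $i=1,2$, be $q$-matroids and $E=E_1\oplus E_2$. Choose non-degenerate symmetric bilinear forms $\langle\cdot,\cdot\rangle_i$ on $E_i$ and define $\langle v_1+v_2,w_1+w_2\rangle=\langle v_1,w_1\rangle_1+\langle v_2,w_2\rangle_2$ for $v_i,w_i\in E_i$. Then $\langle\cdot,\cdot\rangle$ is a non-degenerate symmetric bilinear form on $E$ and \[ (\mathcal{M}_1\oplus\mathcal{M}_2)^*=\mathcal{M}_1^*\oplus\mathcal{M}_2^*, \] where $\mathcal{M}_i^*$ is the dual with respect to $\langle\cdot,\cdot\rangle_i$ and $(\mathcal{M}_1\oplus\mathcal{M}_2)^*$ the dual with respect to $\langle\cdot,\cdot\rangle$.
   Context: Let $\mathbb{F}=\mathbb{F}_q$. A $q$-matroid is $\mathcal{M}=(E,\rho)$, $E$ a finite-dimensional $\mathbb{F}$-vector space, $\rho$ from subspaces to $\mathbb{Z}_{\ge0}$ with $0\le\rho(V)\le\dim V$, monotone and submodular. Given a non-degenerate symmetric bilinear form on $E$ with orthogonal spaces $V^\perp$, the dual of $\mathcal{M}$ is $\mathcal{M}^*=(E,\rho^* )$ with $\rho^*(V)=\dim V+\rho(V^\perp)-\rho(E)$. Direct sum: for $E=E_1\oplus E_2$ with projections $\pi_i:E\to E_i$, $\mathcal{M}_1\oplus\mathcal{M}_2=(E,\rho)$ where $\rho(V)=\dim V+\min_{X\le V}(\rho_1(\pi_1(X))+\rho_2(\pi_2(X))-\dim X)$. *)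

From HB Require Import structures.
From mathcomp Require Import all_boot all_order all_algebra.
Set Implicit Arguments. Unset Strict Implicit. Unset Printing Implicit Defensive.
Import Order.TTheory GRing.Theory Num.Theory.
Local Open Scope ring_scope.

(* Ambient spaces: E = 'rV[F]_n with F a finite field (F = F_q).
   Subspaces are {vspace 'rV[F]_n}; over a finite field these form a finite type. *)

Import VectorInternalTheory.
HB.instance Definition _ (F : finFieldType) (n : nat) :=
  [Finite of {vspace 'rV[F]_n} by <:].


Section QMat.
Variable F : finFieldType.

Definition qmatroid (n : nat) (rho : {vspace 'rV[F]_n} -> int) : Prop :=
  [/\ (forall V, 0 <= rho V /\ rho V <= (\dim V)%:Z),
      (forall V W, (V <= W)%VS -> rho V <= rho W) &
      (forall V W, rho (V + W)%VS + rho (V :&: W)%VS <= rho V + rho W)].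

Definition nondeg_sym_bilinear (n : nat) (b : 'rV[F]_n -> 'rV[F]_n -> F) : Prop :=
  [/\ (forall a u v w, b (a *: u + v) w = a * b u w + b v w),
      (forall a u v w, b u (a *: v + w) = a * b u v + b u w),
      (forall u v, b u v = b v u) &
      (forall u, (forall v, b u v = 0) -> u = 0)].

Definition orth (n : nat) (b : 'rV[F]_n -> 'rV[F]_n -> F) (V : {vspace 'rV[F]_n})
  : {vspace 'rV[F]_n} :=
  <<[seq w <- enum [set: 'rV[F]_n] | [forall v, (v \in V) ==> (b v w == 0%R)]]>>%VS.

Definition qdual (n : nat) (b : 'rV[F]_n -> 'rV[F]_n -> F)
  (rho : {vspace 'rV[F]_n} -> int) (V : {vspace 'rV[F]_n}) : int :=
  (\dim V)%:Z + rho (orth b V) - rho fullv.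

(* E = E1 (+) E2 realized as 'rV_(n1 + n2) = row_mx E1 E2, with projections
   lsubmx / rsubmx. *)
Definition proj1 (n1 n2 : nat) : 'Hom('rV[F]_(n1 + n2), 'rV[F]_n1) :=
  linfun (@lsubmx F 1 n1 n2).
Definition proj2 (n1 n2 : nat) : 'Hom('rV[F]_(n1 + n2), 'rV[F]_n2) :=
  linfun (@rsubmx F 1 n1 n2).

Definition dsum_term (n1 n2 : nat) (rho1 : {vspace 'rV[F]_n1} -> int)
  (rho2 : {vspace 'rV[F]_n2} -> int) (X : {vspace 'rV[F]_(n1 + n2)}) : int :=
  rho1 (proj1 n1 n2 @: X)%VS + rho2 (proj2 n1 n2 @: X)%VS - (\dim X)%:Z.

Definition qdsum (n1 n2 : nat) (rho1 : {vspace 'rV[F]_n1} -> int)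
  (rho2 : {vspace 'rV[F]_n2} -> int) (V : {vspace 'rV[F]_(n1 + n2)}) : int :=
  (\dim V)%:Z +
  \big[Num.min/dsum_term rho1 rho2 0%VS]_(X : {vspace 'rV[F]_(n1 + n2)} | (X <= V)%VS)
     dsum_term rho1 rho2 X.

Definition sum_form (n1 n2 : nat) (b1 : 'rV[F]_n1 -> 'rV[F]_n1 -> F)
  (b2 : 'rV[F]_n2 -> 'rV[F]_n2 -> F) (v w : 'rV[F]_(n1 + n2)) : F :=
  b1 (lsubmx v) (lsubmx w) + b2 (rsubmx v) (rsubmx w).

End QMat.

(* Write T(X) = rho1(pi1 X) + rho2(pi2 X) - dim X, let D(X) be the same
   expression built from the dual ranks, and let W = V^perp.  The direct sum
   has rank rho1(E1) + rho2(E2) on the whole space, so the theorem amounts to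
     min_{X <= V} D(X) + rho1(E1) + rho2(E2) = dim W + min_{Z <= W} T(Z).
   Each inequality is witnessed by an explicit subspace:
   Z = W :&: ((pi1 X)^perp (+) (pi2 X)^perp) for X <= V, and
   X = V :&: (pi1 Z (+) pi2 Z)^perp for Z <= W.  Both estimates are dimension
   counts resting on (A (+) B)^perp = A^perp (+) B^perp for the sum form,
   dim U^perp = dim E - dim U, and rho(A) <= rho(B) + dim A - dim B for
   B <= A. *)

From HB Require Import structures.
From mathcomp Require Import all_boot all_order all_algebra.
From mathcomp Require Import zify.
Import Order.TTheory GRing.Theory Num.Theory.
Set Implicit Arguments.
Unset Strict Implicit.
Unset Printing Implicit Defensive.
Local Open Scope ring_scope.

Lemma dim_full (F : fieldType) (m : nat) : \dim (fullv : {vspace 'rV[F]_m}) = m.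
Proof. by rewrite dimvf /dim /= mul1n. Qed.

Section Form.
Variables (F : finFieldType) (n : nat) (b : 'rV[F]_n -> 'rV[F]_n -> F).
Hypothesis hb : nondeg_sym_bilinear b.

Lemma formC u v : b u v = b v u.
Proof. by case: hb. Qed.

Lemma formDl u v w : b (u + v) w = b u w + b v w.
Proof.
by case: hb => linl _ _ _; have := linl 1 u v w; rewrite scale1r mul1r.
Qed.

Lemma form0l w : b 0 w = 0.
Proof. by apply: (addrI (b 0 w)); rewrite addr0 -formDl addr0. Qed.

Lemma formZl a u w : b (a *: u) w = a * b u w.
Proof. by case: hb => linl _ _ _; rewrite -[a *: u]addr0 linl form0l addr0. Qed.

Lemma formDr u v w : b w (u + v) = b w u + b w v.
Proof. by rewrite !(formC w) formDl. Qed.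

Lemma formZr a u w : b w (a *: u) = a * b w u.
Proof. by rewrite !(formC w) formZl. Qed.

Lemma form0r w : b w 0 = 0.
Proof. by rewrite formC form0l. Qed.

Lemma form_sumr (I : finType) (c : I -> F) (x : I -> 'rV_n) w :
  b w (\sum_i c i *: x i) = \sum_i c i * b w (x i).
Proof.
by elim/big_rec2: _ => [|i y1 y2 _ <-]; rewrite ?form0r // formDr formZr.
Qed.

Lemma form_suml (I : finType) (c : I -> F) (x : I -> 'rV_n) w :
  b (\sum_i c i *: x i) w = \sum_i c i * b (x i) w.
Proof. by rewrite formC form_sumr; apply: eq_bigr => i _; rewrite formC. Qed.

Lemma memv_orth (V : {vspace 'rV[F]_n}) w :
  reflect (forall v, v \in V -> b v w = 0) (w \in orth b V).
Proof.
rewrite /orth; apply: (iffP idP) => [|orthw].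
  set X := [seq _ <- _ | _] => /(coord_span (X := in_tuple X)) -> v vV.
  rewrite form_sumr big1 // => i _.
  have : (in_tuple X)`_i \in X by exact: mem_nth.
  rewrite mem_filter => /andP[/forallP/(_ v)/implyP/(_ vV)/eqP -> _].
  exact: mulr0.
apply: memv_span; rewrite mem_filter mem_enum inE andbT.
by apply/forallP => v; apply/implyP => vV; rewrite orthw.
Qed.

Lemma orthS U V : (U <= V)%VS -> (orth b V <= orth b U)%VS.
Proof.
move=> /subvP UV; apply/subvP => w /memv_orth orthw.
by apply/memv_orth => u /UV; apply: orthw.
Qed.

Lemma sub_orth_sym U V : (U <= orth b V)%VS -> (V <= orth b U)%VS.
Proof.
move=> /subvP UV; apply/subvP => v vV; apply/memv_orth => u /UV /memv_orth.
by rewrite formC; apply.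
Qed.

Definition orth_mx (V : {vspace 'rV[F]_n}) : 'M[F]_(n, \dim V) :=
  \matrix_(j, i) b (vbasis V)`_i (delta_mx 0 j).

Lemma mul_orth_mx V w i : (w *m orth_mx V) 0 i = b (vbasis V)`_i w.
Proof.
rewrite mxE [in RHS](row_sum_delta w) form_sumr.
by apply: eq_bigr => j _; rewrite mxE.
Qed.

Lemma orth_lker V : orth b V = lker (linfun (mulmxr (orth_mx V))).
Proof.
apply/vspaceP => w; rewrite memv_ker lfunE /=; apply/memv_orth/eqP.
  move=> orthw; apply/rowP => i; rewrite mul_orth_mx mxE.
  by apply: orthw; apply/vbasis_mem/mem_nth; rewrite size_tuple.
move=> wA v vV; rewrite (coord_vbasis vV) form_suml big1 // => i _.
by rewrite -mul_orth_mx wA mxE mulr0.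
Qed.

Lemma orth_mx_row_full V : row_full (orth_mx V).
Proof.
rewrite /row_full -mxrank_tr; apply: inj_row_free => c cA.
have orth_c w : b (\sum_i c 0 i *: (vbasis V)`_i) w = 0.
  rewrite [w]row_sum_delta form_sumr big1 // => j _.
  suff -> : b (\sum_i c 0 i *: (vbasis V)`_i) (delta_mx 0 j) = 0.
    by rewrite mulr0.
  have /rowP/(_ j) := cA; rewrite !mxE => <-; rewrite form_suml.
  by apply: eq_bigr => i _; rewrite !mxE.
have /freeP free_basis := basis_free (vbasisP V).
case: hb => _ _ _ /(_ _ orth_c) /free_basis c0.
by apply/rowP => i; rewrite mxE c0.
Qed.

Lemma dim_orthD V : (\dim (orth b V) + \dim V)%N = n.
Proof.
set g : 'Hom(_, 'rV[F]_(\dim V)) := linfun (mulmxr (orth_mx V)).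
have g_onto : (g @: fullv)%VS = fullv.
  apply/eqP; rewrite eqEsubv subvf /=; apply/subvP => c _; apply/memv_imgP.
  exists (c *m pinvmx (orth_mx V)); first exact: memvf.
  by rewrite lfunE /= mulmxKpV // submx_full // orth_mx_row_full.
have := limg_ker_dim g fullv.
by rewrite capfv g_onto -orth_lker !dim_full.
Qed.

End Form.

Lemma dimv_limg_leq (K : fieldType) (aT rT : vectType K) (f : 'Hom(aT, rT)) U :
  (\dim (f @: U) <= \dim U)%N.
Proof. by rewrite -(limg_ker_dim f U) leq_addl. Qed.

Section DirectSum.
Variables (F : finFieldType) (n1 n2 : nat).
Local Notation p1 := (proj1 F n1 n2).
Local Notation p2 := (proj2 F n1 n2).

Definition inj1 : 'Hom('rV[F]_n1, 'rV[F]_(n1 + n2)) :=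
  linfun (mulmxr (row_mx 1%:M 0)).
Definition inj2 : 'Hom('rV[F]_n2, 'rV[F]_(n1 + n2)) :=
  linfun (mulmxr (row_mx 0 1%:M)).

Lemma inj1E x : inj1 x = row_mx x 0.
Proof. by rewrite lfunE /= mul_mx_row mulmx1 mulmx0. Qed.

Lemma inj2E x : inj2 x = row_mx 0 x.
Proof. by rewrite lfunE /= mul_mx_row mulmx1 mulmx0. Qed.

Lemma proj1E v : p1 v = lsubmx v.
Proof. by rewrite lfunE. Qed.

Lemma proj2E v : p2 v = rsubmx v.
Proof. by rewrite lfunE. Qed.

Definition dsumv (A : {vspace 'rV[F]_n1}) (B : {vspace 'rV[F]_n2}) :=
  (inj1 @: A + inj2 @: B)%VS.

Lemma memv_dsumv A B z :
  (z \in dsumv A B) = (lsubmx z \in A) && (rsubmx z \in B).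
Proof.
apply/idP/andP => [|[zA zB]].
  case/memv_addP=> _ /memv_imgP[x xA ->] [_ /memv_imgP[y yB ->] ->].
  by rewrite inj1E inj2E add_row_mx addr0 add0r row_mxKl row_mxKr.
have -> : z = inj1 (lsubmx z) + inj2 (rsubmx z).
  by rewrite inj1E inj2E add_row_mx addr0 add0r hsubmxK.
by apply: memv_add; apply: memv_img.
Qed.

Lemma inj1_dsumv A B x : (inj1 x \in dsumv A B) = (x \in A).
Proof. by rewrite memv_dsumv inj1E row_mxKl row_mxKr mem0v andbT. Qed.

Lemma inj2_dsumv A B y : (inj2 y \in dsumv A B) = (y \in B).
Proof. by rewrite memv_dsumv inj2E row_mxKl row_mxKr mem0v. Qed.

Lemma limg_proj1_dsumv A B : (p1 @: dsumv A B <= A)%VS.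
Proof.
apply/subvP => x /memv_imgP[z]; rewrite memv_dsumv proj1E => /andP[zA _] ->.
exact: zA.
Qed.

Lemma limg_proj2_dsumv A B : (p2 @: dsumv A B <= B)%VS.
Proof.
apply/subvP => y /memv_imgP[z]; rewrite memv_dsumv proj2E => /andP[_ zB] ->.
exact: zB.
Qed.

Lemma dim_dsumv A B : \dim (dsumv A B) = (\dim A + \dim B)%N.
Proof.
apply/eqP; rewrite eqn_leq; apply/andP; split.
  apply: leq_trans (dimv_add_leqif _ _) _.
  by apply: leq_add; apply: dimv_limg_leq.
rewrite -(limg_ker_dim p1 (dsumv A B)) addnC; apply: leq_add.
  apply: leq_trans (dimv_limg_leq p2 _); apply/dimvS/subvP => y yB.
  apply/memv_imgP; exists (inj2 y); last by rewrite proj2E inj2E row_mxKr.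
  by rewrite memv_cap inj2_dsumv yB memv_ker proj1E inj2E row_mxKl eqxx.
apply/dimvS/subvP => x xA; apply/memv_imgP; exists (inj1 x).
  by rewrite inj1_dsumv.
by rewrite proj1E inj1E row_mxKl.
Qed.

Lemma sub_dsumv_limg (Z : {vspace 'rV[F]_(n1 + n2)}) :
  (Z <= dsumv (p1 @: Z) (p2 @: Z))%VS.
Proof.
by apply/subvP => z zZ; rewrite memv_dsumv -proj1E -proj2E !memv_img.
Qed.

Lemma limg_proj1_full : (p1 @: fullv = fullv)%VS.
Proof.
apply/eqP; rewrite eqEsubv subvf; apply/subvP => x _; apply/memv_imgP.
by exists (inj1 x); rewrite ?memvf // proj1E inj1E row_mxKl.
Qed.

Lemma limg_proj2_full : (p2 @: fullv = fullv)%VS.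
Proof.
apply/eqP; rewrite eqEsubv subvf; apply/subvP => y _; apply/memv_imgP.
by exists (inj2 y); rewrite ?memvf // proj2E inj2E row_mxKr.
Qed.

Variables (b1 : 'rV[F]_n1 -> 'rV[F]_n1 -> F) (b2 : 'rV[F]_n2 -> 'rV[F]_n2 -> F).
Hypotheses (hb1 : nondeg_sym_bilinear b1) (hb2 : nondeg_sym_bilinear b2).
Local Notation b := (sum_form b1 b2).

Lemma sum_form_nondeg : nondeg_sym_bilinear b.
Proof.
rewrite /sum_form; split.
- move=> a u v w; rewrite !linearD !linearZ /= !(formDl, formZl) //.
  by rewrite mulrDr addrACA.
- move=> a u v w; rewrite !linearD !linearZ /= !(formDr, formZr) //.
  by rewrite mulrDr addrACA.
- by move=> u v; rewrite (formC hb1) (formC hb2).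
move=> u orthu; rewrite -[u]hsubmxK.
have -> : lsubmx u = 0.
  case: hb1 => _ _ _; apply => x; have := orthu (inj1 x).
  by rewrite inj1E row_mxKl row_mxKr form0r // addr0.
have -> : rsubmx u = 0.
  case: hb2 => _ _ _; apply => y; have := orthu (inj2 y).
  by rewrite inj2E row_mxKl row_mxKr form0r // add0r.
exact: row_mx0.
Qed.

Lemma orth_dsumv A B : orth b (dsumv A B) = dsumv (orth b1 A) (orth b2 B).
Proof.
have hb := sum_form_nondeg.
apply/vspaceP => w; rewrite memv_dsumv.
apply/(memv_orth hb)/andP => [orthw|[]].
  split; [apply/(memv_orth hb1) => x xA | apply/(memv_orth hb2) => y yB].
    have := orthw (inj1 x); rewrite inj1_dsumv /sum_form inj1E.
    by rewrite row_mxKl row_mxKr form0l // addr0 formC //; apply.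
  have := orthw (inj2 y); rewrite inj2_dsumv /sum_form inj2E.
  by rewrite row_mxKl row_mxKr form0l // add0r formC //; apply.
move=> /(memv_orth hb1) orth1 /(memv_orth hb2) orth2 v.
by rewrite memv_dsumv /sum_form => /andP[/orth1 -> /orth2 ->]; rewrite addr0.
Qed.

End DirectSum.

Section QMatroid.
Variables (F : finFieldType) (n : nat) (rho : {vspace 'rV[F]_n} -> int).
Hypothesis hrho : qmatroid rho.

Lemma qrankS U V : (U <= V)%VS -> rho U <= rho V.
Proof. by case: hrho => _ mono _; apply: mono. Qed.

Lemma qrank_le_add_codim B A : (B <= A)%VS ->
  rho A <= rho B + (\dim A)%:Z - (\dim B)%:Z.
Proof.
move=> BA; case: hrho => bounds _ submod.
set C := (A :\: B)%VS.
have BC : (B + C = A)%VS.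
  by rewrite addvC /C -[in RHS](addv_diff_cap A B) (capv_idPr BA).
have BC0 : (B :&: C = 0)%VS by rewrite capvC capv_diff.
have := submod B C; have := dimv_disjoint_sum BC0.
rewrite BC BC0; have [? _] := bounds 0%VS; have [_ ?] := bounds C.
lia.
Qed.

Lemma qrank_full_le U : rho fullv <= rho U + n%:Z - (\dim U)%:Z.
Proof. by have := qrank_le_add_codim (subvf U); rewrite dim_full. Qed.

End QMatroid.

Lemma bigmin_shift_le (R : realDomainType) (I J : finType)
    (P : pred I) (Q : pred J) (f : I -> R) (g : J -> R) x0 j0 c d :
  Q j0 -> (forall j, Q j -> exists2 i, P i & f i + c <= g j + d) ->
  \big[Num.min/x0]_(i | P i) f i + c <= \big[Num.min/g j0]_(j | Q j) g j + d.
Proof.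
move=> Qj0 fg.
have min_le j : Q j -> \big[Num.min/x0]_(i | P i) f i + c - d <= g j.
  case/fg=> i Pi le_fg; rewrite lerBlDr (le_trans _ le_fg) // lerD2r.
  exact: bigmin_le_cond.
by rewrite -lerBlDr; apply/bigmin_geP; split; [apply: min_le | apply: min_le].
Qed.

Section DirectSumRank.
Variables (F : finFieldType) (n1 n2 : nat).
Variables (rho1 : {vspace 'rV[F]_n1} -> int) (rho2 : {vspace 'rV[F]_n2} -> int).
Hypotheses (h1 : qmatroid rho1) (h2 : qmatroid rho2).
Local Notation p1 := (proj1 F n1 n2).
Local Notation p2 := (proj2 F n1 n2).
Local Notation T := (dsum_term rho1 rho2).

Lemma dsum_term_full : T fullv = rho1 fullv + rho2 fullv - (n1 + n2)%N%:Z.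
Proof. by rewrite /dsum_term limg_proj1_full limg_proj2_full dim_full. Qed.

Lemma dsum_term_ge_full X : T fullv <= T X.
Proof.
have := qrank_full_le h1 (p1 @: X); have := qrank_full_le h2 (p2 @: X).
have := dimvS (sub_dsumv_limg X); rewrite dim_dsumv dsum_term_full /dsum_term.
lia.
Qed.

Lemma qdsum_full : qdsum rho1 rho2 fullv = rho1 fullv + rho2 fullv.
Proof.
rewrite /qdsum (_ : \big[_/_]_(X | _) _ = T fullv).
  by rewrite dsum_term_full dim_full; lia.
apply/le_anti/andP; split; first by apply: bigmin_le_cond; apply: subvf.
by apply/bigmin_geP; split=> *; apply: dsum_term_ge_full.
Qed.

End DirectSumRank.

Section DualDirectSum.
Variables (F : finFieldType) (n1 n2 : nat).
Variables (rho1 : {vspace 'rV[F]_n1} -> int) (rho2 : {vspace 'rV[F]_n2} -> int).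
Variables (b1 : 'rV[F]_n1 -> 'rV[F]_n1 -> F) (b2 : 'rV[F]_n2 -> 'rV[F]_n2 -> F).
Hypotheses (h1 : qmatroid rho1) (h2 : qmatroid rho2).
Hypotheses (hb1 : nondeg_sym_bilinear b1) (hb2 : nondeg_sym_bilinear b2).
Local Notation p1 := (proj1 F n1 n2).
Local Notation p2 := (proj2 F n1 n2).
Local Notation b := (sum_form b1 b2).
Local Notation T := (dsum_term rho1 rho2).
Local Notation D := (dsum_term (qdual b1 rho1) (qdual b2 rho2)).
Let hb := sum_form_nondeg hb1 hb2.

Lemma exists_dsum_term_le_dual_term V X : (X <= V)%VS ->
  exists2 Z, (Z <= orth b V)%VS &
    T Z + (\dim (orth b V))%:Z <= D X + (rho1 fullv + rho2 fullv).
Proof.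
move=> XV; set W := orth b V.
set A := orth b1 (p1 @: X); set B := orth b2 (p2 @: X).
exists (W :&: dsumv A B)%VS; first exact: capvSl.
have dsumv_orth : (dsumv A B <= orth b X)%VS.
  by rewrite -orth_dsumv //; apply/orthS/sub_dsumv_limg.
have /dimvS : (W + dsumv A B <= orth b X)%VS by rewrite subv_add orthS.
have := qrankS h1 (subv_trans (limgS p1 (capvSr W _)) (limg_proj1_dsumv A B)).
have := qrankS h2 (subv_trans (limgS p2 (capvSr W _)) (limg_proj2_dsumv A B)).
have := dimv_sum_cap W (dsumv A B); rewrite dim_dsumv.
have := dim_orthD hb1 (p1 @: X); have := dim_orthD hb2 (p2 @: X).
have := dim_orthD hb X.
rewrite /dsum_term /qdual -/A -/B; lia.
Qed.

Lemma exists_dual_term_le_dsum_term V Z : (Z <= orth b V)%VS ->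
  exists2 X, (X <= V)%VS &
    D X + (rho1 fullv + rho2 fullv) <= T Z + (\dim (orth b V))%:Z.
Proof.
move=> ZW; set P := dsumv (p1 @: Z) (p2 @: Z).
exists (V :&: orth b P)%VS; first exact: capvSl.
set X := (V :&: orth b P)%VS.
have orthP : orth b P = dsumv (orth b1 (p1 @: Z)) (orth b2 (p2 @: Z)).
  exact: orth_dsumv.
have Z1 : (p1 @: Z <= orth b1 (p1 @: X))%VS.
  apply: sub_orth_sym => //; apply: subv_trans (limgS p1 (capvSr V _)) _.
  by rewrite orthP limg_proj1_dsumv.
have Z2 : (p2 @: Z <= orth b2 (p2 @: X))%VS.
  apply: sub_orth_sym => //; apply: subv_trans (limgS p2 (capvSr V _)) _.
  by rewrite orthP limg_proj2_dsumv.
have /dimvS : (V + orth b P <= orth b Z)%VS.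
  by rewrite subv_add sub_orth_sym // orthS // sub_dsumv_limg.
have := dimv_sum_cap V (orth b P).
have := qrank_le_add_codim h1 Z1; have := qrank_le_add_codim h2 Z2.
have := dim_orthD hb1 (p1 @: X); have := dim_orthD hb2 (p2 @: X).
have := dim_orthD hb P; have := dim_orthD hb Z; have := dim_orthD hb V.
rewrite dim_dsumv /dsum_term /qdual -/X; lia.
Qed.

Lemma qdsum_qdual V :
  qdsum (qdual b1 rho1) (qdual b2 rho2) V + (rho1 fullv + rho2 fullv) =
  (\dim V)%:Z + qdsum rho1 rho2 (orth b V).
Proof.
rewrite /qdsum -!addrA [(\dim (orth b V))%:Z + _]addrC; congr (_ + _).
apply/le_anti/andP; split; apply: bigmin_shift_le; rewrite ?sub0v //.
  exact: exists_dual_term_le_dsum_term.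
exact: exists_dsum_term_le_dual_term.
Qed.

End DualDirectSum.

Theorem theorem5p10 (F : finFieldType) (n1 n2 : nat)
  (rho1 : {vspace 'rV[F]_n1} -> int) (rho2 : {vspace 'rV[F]_n2} -> int)
  (b1 : 'rV[F]_n1 -> 'rV[F]_n1 -> F) (b2 : 'rV[F]_n2 -> 'rV[F]_n2 -> F) :
  qmatroid rho1 -> qmatroid rho2 ->
  nondeg_sym_bilinear b1 -> nondeg_sym_bilinear b2 ->
  nondeg_sym_bilinear (sum_form b1 b2) /\
  qdual (sum_form b1 b2) (qdsum rho1 rho2) =1
    qdsum (qdual b1 rho1) (qdual b2 rho2).
Proof.
move=> h1 h2 hb1 hb2; split=> [|V]; first exact: sum_form_nondeg.
rewrite [qdual _ _ V]/qdual -(qdsum_qdual h1 h2 hb1 hb2).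
by rewrite (qdsum_full h1 h2) addrK.
Qed.
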